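(* Let $E$ be an arbitrary directed graph. Then every descending chain $U_1\supseteq U_2\supseteq\cdots$ of compact open invariant subsets of $G_E^{(0)}$ stabilizes. Moreover, every nonempty compact open invariant subset of $G_E^{(0)}$ contains a minimal one, i.e. a nonempty compact open invariant subset containing no strictly smaller nonempty compact open invariant subset.
   Context: For a directed graph $E$ (paths $\mu=\mu_1\cdots\mu_n$ with $r(\mu_i)=s(\mu_{i+1})$, $|\mu|=n$, $\mathrm{Path}(E)$ the finite paths including vertices, $E^\infty$ infinite paths, sinks = vertices emitting no edges, $\mathrm{Inf}(E)$ = vertices emitting infinitely many edges), let $X=E^\infty\cup\{\mu\in\mathrm{Path}(E): r(\mu)\text{ a sink}\}\cup\{\mu: r(\mu)\in\mathrm{Inf}(E)\}$ and $G_E=\{(\alpha x,|\alpha|-|\beta|,\beta x):\alpha,\beta\in\mathrm{Path}(E),x\in X,r(\alpha)=r(\beta)=s(x)\}$, with product $(x,k,y)(y,l,z)=(x,k+l,z)$, inverse $(y,-k,x)$, range $(x,0,x)$, source $(y,0,y)$; unit space $G_E^{(0)}=\{(x,0,x)\}\cong X$, topologized by the basis of compact open sets $Z(\mu)\setminus\bigcup_{e\in F}Z(\mu e)$ with $Z(\mu)=\{\mu x:x\in X,s(x)=r(\mu)\}$ and $F\subseteq s^{-1}(r(\mu))$ finite. $U\subseteq G_E^{(0)}$ is invariant if for every $\gamma\in G_E$, $s(\gamma)\in U$ iff $r(\gamma)\in U$. *)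

From Stdlib Require Import List ZArith Arith.
Import ListNotations.
Set Implicit Arguments.

Record graph : Type := Graph {
  V : Type;
  Ed : Type;
  src : Ed -> V;
  rng : Ed -> V }.

Arguments src {g} _.
Arguments rng {g} _.
Section G.
Variable E : graph.

(* A finite path is a start vertex v together with a list of edges es
   (the vertex v itself is the path of length 0). *)
Fixpoint fpath_ok (v : V E) (es : list (Ed E)) : Prop :=
  match es with
  | [] => True
  | e :: es' => src e = v /\ fpath_ok (rng e) es'
  end.

Fixpoint fend (v : V E) (es : list (Ed E)) : V E :=
  match es with
  | [] => v
  | e :: es' => fend (rng e) es'
  end.

Definition is_sink (v : V E) : Prop := forall e : Ed E, src e <> v.

Definition inf_emitter (v : V E) : Prop :=
  ~ exists l : list (Ed E), forall e, src e = v -> In e l.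

(* Candidate points of the boundary path space: finite or infinite paths. *)
Inductive bpath : Type :=
| Fin : V E -> list (Ed E) -> bpath
| Inf : (nat -> Ed E) -> bpath.

Definition in_X (b : bpath) : Prop :=
  match b with
  | Fin v es => fpath_ok v es /\ (is_sink (fend v es) \/ inf_emitter (fend v es))
  | Inf x => forall n, rng (x n) = src (x (S n))
  end.

Definition bsrc (b : bpath) : V E :=
  match b with
  | Fin v _ => v
  | Inf x => src (x 0)
  end.

Definition prepend (v : V E) (es : list (Ed E)) (b : bpath) : bpath :=
  match b with
  | Fin _ fs => Fin v (es ++ fs)
  | Inf x => Inf (fun n => match nth_error es n with
                           | Some e => e
                           | None => x (n - length es)
                           end)
  end.

Definition in_GE (x : bpath) (k : Z) (y : bpath) : Prop :=
  exists (va : V E) (a : list (Ed E)) (vb : V E) (b : list (Ed E)) (z : bpath),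
    fpath_ok va a /\ fpath_ok vb b /\ in_X z /\
    fend va a = bsrc z /\ fend vb b = bsrc z /\
    x = prepend va a z /\ y = prepend vb b z /\
    k = (Z.of_nat (length a) - Z.of_nat (length b))%Z.

(* subsets of G_E^(0) ≅ X are predicates on bpath, considered on X *)
Definition subsetX (A B : bpath -> Prop) : Prop :=
  forall x, in_X x -> A x -> B x.

Definition nonemptyX (A : bpath -> Prop) : Prop := exists x, in_X x /\ A x.

(* invariance: for γ = (x,k,y), r(γ) = x, s(γ) = y *)
Definition invariant (U : bpath -> Prop) : Prop :=
  forall x k y, in_GE x k y -> (U y <-> U x).

Definition cyl (v : V E) (es : list (Ed E)) (b : bpath) : Prop :=
  exists z, in_X z /\ bsrc z = fend v es /\ b = prepend v es z.

Definition basic (v : V E) (es : list (Ed E)) (F : list (Ed E)) (b : bpath) : Prop :=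
  cyl v es b /\ forall e, In e F -> ~ cyl v (es ++ [e]) b.

Definition basic_ok (v : V E) (es : list (Ed E)) (F : list (Ed E)) : Prop :=
  fpath_ok v es /\ forall e, In e F -> src e = fend v es.

Definition openX (U : bpath -> Prop) : Prop :=
  forall x, in_X x -> U x ->
    exists v es F, basic_ok v es F /\ basic v es F x /\ subsetX (basic v es F) U.

Definition compactX (U : bpath -> Prop) : Prop :=
  forall (I : Type) (O : I -> bpath -> Prop),
    (forall i, openX (O i)) ->
    (forall x, in_X x -> U x -> exists i, O i x) ->
    exists l : list I, forall x, in_X x -> U x -> exists i, In i l /\ O i x.

Definition coi (U : bpath -> Prop) : Prop :=
  compactX U /\ openX U /\ invariant U.

Definition minimal_coi (W : bpath -> Prop) : Prop :=
  nonemptyX W /\ coi W /\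
  forall W', nonemptyX W' -> coi W' -> subsetX W' W -> subsetX W W'.

End G.

(* A compact set U of boundary paths has its sources in a finite set S of
   vertices, and an open invariant U is determined by finitely many bits: for
   each w in S, whether the vertex w (as a boundary path) lies in U and whether
   the whole cylinder Z(w) lies in U. Indeed, by invariance a finite path lies
   in U iff its range vertex does; an infinite path in U has a basic
   neighbourhood Z(mu) \ Z(mu F) inside U, and one edge further along the path
   that neighbourhood contains a full cylinder Z(mu e), hence Z(r(e)) is
   contained in U by invariance. Counting the true bits gives a monotone
   measure with values in N which is strictly monotone on compact open
   invariant sets, so descending chains stabilise and a compact open invariant
   set of least measure below U is minimal. *)
From Stdlib Require Import List ZArith Lia Classical ClassicalEpsilon FunctionalExtensionality.
Import ListNotations.

Definition indicator (P : Prop) : nat := if excluded_middle_informative P then 1 else 0.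

Lemma indicator_mono (P Q : Prop) : (P -> Q) -> indicator P <= indicator Q.
Proof.
  unfold indicator; intro HPQ.
  destruct (excluded_middle_informative P), (excluded_middle_informative Q); tauto || lia.
Qed.

Lemma impl_of_indicator_le (P Q : Prop) : indicator Q <= indicator P -> Q -> P.
Proof.
  unfold indicator.
  destruct (excluded_middle_informative P), (excluded_middle_informative Q); tauto || lia.
Qed.

Lemma list_sum_map_mono {A : Type} (f g : A -> nat) (l : list A) :
  (forall a, In a l -> f a <= g a) -> list_sum (map f l) <= list_sum (map g l).
Proof.
  induction l as [|b l IH]; simpl; intro Hfg; [lia|].
  specialize (IH (fun a Ha => Hfg a (or_intror Ha))).
  specialize (Hfg b (or_introl eq_refl)); lia.
Qed.

Lemma list_sum_map_mono_rigid {A : Type} (f g : A -> nat) (l : list A) :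
  (forall a, In a l -> f a <= g a) -> list_sum (map g l) <= list_sum (map f l) ->
  forall a, In a l -> g a <= f a.
Proof.
  induction l as [|b l IH]; simpl; intros Hfg Hsum a Ha; [contradiction|].
  pose proof (list_sum_map_mono f g l (fun a Ha => Hfg a (or_intror Ha))).
  pose proof (Hfg b (or_introl eq_refl)).
  destruct Ha as [<-|Ha]; [lia|].
  apply IH; auto; lia.
Qed.

Lemma ex_argmin {A : Type} (m : A -> nat) (P : A -> Prop) :
  (exists a, P a) -> exists a0, P a0 /\ forall a, P a -> m a0 <= m a.
Proof.
  intros [a Ha].
  induction a as [a IH] using (well_founded_induction (Wf_nat.well_founded_ltof A m)).
  destruct (classic (exists b, P b /\ m b < m a)) as [[b [Hb Hlt]]|Hmin].
  - exact (IH b Hlt Hb).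
  - exists a; split; [exact Ha|].
    intros b Hb; apply Nat.nlt_ge; intro Hlt; eauto.
Qed.

Local Arguments fpath_ok {E} v es.
Local Arguments fend {E} v es.
Local Arguments Fin {E} _ _.
Local Arguments Inf {E} _.

Section BoundaryPaths.

Context {E : graph}.
Implicit Types (U : bpath E -> Prop) (v w : V E) (a es : list (Ed E)) (z : bpath E).

Lemma prepend_nil v z : bsrc z = v -> prepend v [] z = z.
Proof.
  destruct z as [u fs|x]; simpl; intros Hv.
  - now subst.
  - f_equal; apply functional_extensionality; intros [|n]; simpl; f_equal; lia.
Qed.

Lemma prepend_app v u a es z : prepend v (a ++ es) z = prepend v a (prepend u es z).
Proof.
  destruct z as [w fs|x]; simpl.
  - now rewrite app_assoc.
  - f_equal; apply functional_extensionality; intro n.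
    destruct (Nat.lt_ge_cases n (length a)) as [Hn|Hn].
    + rewrite nth_error_app1 by lia.
      destruct (nth_error a n) eqn:Ha; [reflexivity|].
      apply nth_error_None in Ha; lia.
    + rewrite nth_error_app2 by lia.
      rewrite (proj2 (nth_error_None a n)) by lia.
      destruct (nth_error es (n - length a)); [reflexivity|].
      rewrite length_app; f_equal; lia.
Qed.

Lemma fpath_ok_app v a es : fpath_ok v (a ++ es) <-> fpath_ok v a /\ fpath_ok (fend v a) es.
Proof. revert v; induction a as [|e a IH]; intro v; simpl; [tauto|rewrite IH; tauto]. Qed.

Lemma fend_app v a es : fend v (a ++ es) = fend (fend v a) es.
Proof. revert v; induction a; intro v; simpl; auto. Qed.

Lemma bsrc_prepend v a z : fpath_ok v a -> fend v a = bsrc z -> bsrc (prepend v a z) = v.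
Proof. destruct z, a; simpl; intros; try tauto; subst; f_equal; lia. Qed.

Lemma in_X_prepend_edge (e : Ed E) z :
  rng e = bsrc z -> in_X z -> in_X (prepend (src e) [e] z).
Proof.
  destruct z as [w fs|x]; simpl; intros He Hz.
  - subst; tauto.
  - intros [|[|n]]; simpl; rewrite ?Nat.sub_0_r; auto.
Qed.

Lemma in_X_prepend v a z : fpath_ok v a -> fend v a = bsrc z -> in_X z -> in_X (prepend v a z).
Proof.
  revert v; induction a as [|e a IH]; intros v Ha Hend Hz; simpl in Ha, Hend.
  - now rewrite prepend_nil.
  - destruct Ha as [<- Ha].
    rewrite (prepend_app _ (rng e) [e] a).
    apply in_X_prepend_edge; [rewrite bsrc_prepend; auto|auto].
Qed.

Lemma prepend_snoc_inj v es (e1 e2 : Ed E) z1 z2 :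
  prepend v (es ++ [e1]) z1 = prepend v (es ++ [e2]) z2 -> e1 = e2.
Proof.
  destruct z1, z2; simpl; intro H; try discriminate; injection H; intro H'.
  - rewrite <- !app_assoc in H'; apply app_inv_head in H'; now injection H'.
  - apply (f_equal (fun h => h (length es))) in H'.
    rewrite !nth_error_app2, Nat.sub_diag in H' by lia; exact H'.
Qed.

Lemma invariant_prepend {U v a z} :
  invariant U -> fpath_ok v a -> in_X z -> fend v a = bsrc z -> (U (prepend v a z) <-> U z).
Proof.
  intros HU Ha Hz Hend; symmetry.
  apply (HU _ (Z.of_nat (length a))).
  exists v, a, (bsrc z), [], z; repeat split; auto; [now rewrite prepend_nil|simpl; lia].
Qed.

Definition sources_in (Vs : list (V E)) U : Prop := forall x, in_X x -> U x -> In (bsrc x) Vs.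

Lemma compact_sources_finite U : compactX U -> exists Vs, sources_in Vs U.
Proof.
  intro HU.
  destruct (HU (V E) (fun v b => bsrc b = v)) as [Vs HVs].
  - intros v x Hx <-; exists (bsrc x), [], []; repeat split; simpl; auto; try tauto.
    + exists x; repeat split; auto; now rewrite prepend_nil.
    + intros y _ [[z [_ [Hzs ->]]] _]; apply bsrc_prepend; simpl in *; auto.
  - intros x _ _; now exists (bsrc x).
  - exists Vs; intros x Hx Ux.
    destruct (HVs x Hx Ux) as [w [Hw <-]]; exact Hw.
Qed.

Lemma sources_in_subset {Vs U W} : sources_in Vs U -> subsetX W U -> sources_in Vs W.
Proof. intros HVs HWU x Hx Wx; apply HVs, HWU; auto. Qed.

Definition contains_vertex U w : Prop := in_X (Fin w []) /\ U (Fin w []).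

Definition contains_cyl U w : Prop := forall y, in_X y -> bsrc y = w -> U y.

Lemma Inf_eq_prepend_head (g : nat -> Ed E) :
  Inf g = prepend (src (g 0)) [g 0] (Inf (fun n => g (S n))).
Proof. simpl; f_equal; apply functional_extensionality; now intros [|[|n]]. Qed.

(* Passing one more edge e beyond a basic neighbourhood Z(mu) \ Z(mu F) of an
   infinite path leaves the excluded cylinders Z(mu f), f in F, behind. *)
Lemma open_invariant_Inf_tail {U} {f : nat -> Ed E} :
  openX U -> invariant U -> in_X (Inf f) -> U (Inf f) ->
  exists v a z, fpath_ok v a /\ in_X z /\ fend v a = bsrc z /\
    Inf f = prepend v a z /\ contains_cyl U (bsrc z).
Proof.
  intros Uopen Uinv Hf Uf.
  destruct (Uopen _ Hf Uf) as [v [es [F [[Hes HF] [[[z [Hz [Hzs Hfz]]] HnotF] HsubU]]]]].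
  destruct z as [w fs|g]; [discriminate|].
  set (e := g 0); set (t := Inf (fun n => g (S n))).
  assert (Ht : in_X t) by (intro n; apply (Hz (S n))).
  assert (Hts : bsrc t = rng e) by (symmetry; apply Hz).
  assert (Hes' : fpath_ok v (es ++ [e])) by (apply fpath_ok_app; simpl; auto).
  assert (Hend : fend v (es ++ [e]) = rng e) by now rewrite fend_app.
  assert (Hft : Inf f = prepend v (es ++ [e]) t).
  { rewrite Hfz, (prepend_app v (src e)); f_equal; apply Inf_eq_prepend_head. }
  exists v, (es ++ [e]), t; repeat split; auto; try congruence.
  intros y Hy Hys.
  assert (Hey : in_X (prepend (src e) [e] y)) by (apply in_X_prepend_edge; congruence).
  apply (invariant_prepend Uinv Hes' Hy); [congruence|].
  apply HsubU; [apply in_X_prepend; auto; congruence|split].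
  - exists (prepend (src e) [e] y); repeat split; auto.
    + rewrite bsrc_prepend; simpl; auto; congruence.
    + apply prepend_app.
  - intros e' He' [y' [_ [_ Hy']]].
    apply prepend_snoc_inj in Hy'; subst e'.
    apply (HnotF e He'); exists t; repeat split; auto; congruence.
Qed.

Lemma open_invariant_tail {U x} :
  openX U -> invariant U -> in_X x -> U x ->
  exists v a z, fpath_ok v a /\ in_X z /\ fend v a = bsrc z /\ x = prepend v a z /\
    (z = Fin (bsrc z) [] \/ contains_cyl U (bsrc z)).
Proof.
  intros Uopen Uinv Hx Ux.
  destruct x as [v es|f].
  - exists v, es, (Fin (fend v es) []); destruct Hx as [Hes Hend]; repeat split; auto.
    simpl; now rewrite app_nil_r.
  - destruct (open_invariant_Inf_tail Uopen Uinv Hx Ux) as [v [a [z H]]].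
    exists v, a, z; tauto.
Qed.

Lemma open_invariant_subset (Vs : list (V E)) {U1 U2} :
  openX U1 -> invariant U1 -> invariant U2 -> sources_in Vs U1 ->
  (forall w, In w Vs -> contains_vertex U1 w -> contains_vertex U2 w) ->
  (forall w, In w Vs -> contains_cyl U1 w -> contains_cyl U2 w) ->
  subsetX U1 U2.
Proof.
  intros U1open U1inv U2inv HVs Hvert Hcyl x Hx U1x.
  destruct (open_invariant_tail U1open U1inv Hx U1x)
    as [v [a [z [Ha [Hz [Hend [-> Htail]]]]]]].
  apply (invariant_prepend U1inv Ha Hz Hend) in U1x.
  apply (invariant_prepend U2inv Ha Hz Hend).
  assert (HzS : In (bsrc z) Vs) by (apply HVs; auto).
  destruct Htail as [Hzv|Hzc].
  - rewrite Hzv in Hz, U1x |- *; apply Hvert; [exact HzS|split; auto].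
  - now apply (Hcyl _ HzS Hzc).
Qed.

End BoundaryPaths.

Section Measure.

Context {E : graph}.
Implicit Types (U : bpath E -> Prop) (Vs : list (V E)).

Definition weight U (w : V E) : nat :=
  indicator (contains_vertex U w) + indicator (contains_cyl U w).

Definition measure Vs U : nat := list_sum (map (weight U) Vs).

Lemma indicator_contains_mono {U1 U2} w : subsetX U1 U2 ->
  indicator (contains_vertex U1 w) <= indicator (contains_vertex U2 w) /\
  indicator (contains_cyl U1 w) <= indicator (contains_cyl U2 w).
Proof.
  intro H12; split; apply indicator_mono.
  - intros [Hw U1w]; split; auto.
  - intros H1 y Hy Hys; apply H12; auto.
Qed.

Lemma measure_rigid Vs {U1 U2} :
  openX U2 -> invariant U1 -> invariant U2 -> sources_in Vs U2 ->
  subsetX U1 U2 -> measure Vs U2 <= measure Vs U1 -> subsetX U2 U1.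
Proof.
  intros U2open U1inv U2inv HVs H12 Hle.
  assert (Hw : forall w, In w Vs -> weight U2 w <= weight U1 w).
  { apply (list_sum_map_mono_rigid (weight U1)); auto.
    intros w _; destruct (indicator_contains_mono w H12); unfold weight; lia. }
  apply (open_invariant_subset Vs U2open U2inv U1inv HVs); intros w HwS;
    specialize (Hw w HwS); destruct (indicator_contains_mono w H12); unfold weight in Hw;
    apply impl_of_indicator_le; lia.
Qed.

End Measure.

Theorem lemma3p8 (E : graph) :
  (forall U : nat -> bpath E -> Prop,
     (forall n, coi (U n)) ->
     (forall n, subsetX (U (S n)) (U n)) ->
     exists N, forall n, N <= n -> forall x, in_X x -> (U n x <-> U N x))
  /\
  (forall U : bpath E -> Prop, nonemptyX U -> coi U ->
     exists W, subsetX W U /\ minimal_coi W).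
Proof.
  split.
  - intros U Ucoi Udesc.
    assert (Uanti : forall m n, m <= n -> subsetX (U n) (U m)).
    { intros m n Hmn; induction Hmn as [|n _ IH]; intros x Hx Ux; auto.
      apply IH, Udesc; auto. }
    destruct (compact_sources_finite (U 0) (proj1 (Ucoi 0))) as [Vs HVs].
    destruct (ex_argmin (fun n => measure Vs (U n)) (fun _ => True)) as [N [_ HN]];
      [now exists 0|].
    exists N; intros n HNn x Hx.
    destruct (Ucoi N) as [_ [UNopen UNinv]], (Ucoi n) as [_ [_ Uninv]].
    split; [now apply Uanti|].
    revert x Hx; apply (measure_rigid Vs UNopen Uninv UNinv); auto.
    apply (sources_in_subset HVs), Uanti; lia.
  - intros U Une Ucoi.
    destruct (compact_sources_finite U (proj1 Ucoi)) as [Vs HVs].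
    set (below_U W := nonemptyX W /\ coi W /\ subsetX W U).
    destruct (ex_argmin (measure Vs) below_U) as [W [[Wne [Wcoi WU]] Wmin]].
    { exists U; split; [exact Une|split; [exact Ucoi|now intros y]]. }
    exists W; split; [exact WU|split; [exact Wne|split; [exact Wcoi|]]].
    intros W' W'ne W'coi W'W.
    destruct Wcoi as [_ [Wopen Winv]], W'coi as [W'cpt [W'open W'inv]].
    apply (measure_rigid Vs Wopen W'inv Winv (sources_in_subset HVs WU) W'W).
    apply Wmin; split; [exact W'ne|split; [split; auto|]].
    intros x Hx W'x; apply WU, W'W; auto.
Qed.
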